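(* The relation $\{(c(\alpha),c(\beta),c(\gamma)) \text{ padded with } 0 : \alpha,\beta,\gamma<\omega^\omega,\ \alpha+\beta=\gamma\}$ — more precisely, the set of triples of equal-length words over $\omega$ forming the components of $c(\alpha,\beta,\gamma)$ for ordinals $\alpha,\beta,\gamma<\omega^\omega$ with $\alpha+\beta=\gamma$ (ordinal addition) — is $(\omega;+)$-recognizable.
   Context: Ordinal encoding: every ordinal $0<\alpha<\omega^\omega$ can be written uniquely as $\alpha=\sum_{i=m}^{0}\omega^i a_i=\omega^m a_m+\cdots+\omega^0a_0$ with $a_i<\omega$ and $a_m\ne0$; put $c(\alpha)=a_0a_1\cdots a_m\in\omega^*$ (a word over the infinite alphabet $\omega$), and $c(0)=\varepsilon$. For ordinals $\alpha_1,\dots,\alpha_n<\omega^\omega$, $c(\alpha_1,\dots,\alpha_n)$ is the $n$-tuple of words obtained by right-padding each $c(\alpha_j)$ with the symbol $0$ to the common length $\max_j|c(\alpha_j)|$ (equivalently a single word over $\omega^n$). Recognizability: let $\mathfrak M=(\omega;+)$ with $+$ the ternary graph of addition, $\mathfrak L=\{+\}$. Let $\#\notin\omega$ and $\mathfrak M_\#$ the $\{+,P_\#\}$-structure with domain $\omega\cup\{\#\}$, $+$ as in $\mathfrak M$, $P_\#(x)$ iff $x=\#$. For $w=(w_1,\dots,w_n)\in(\omega^* )^n$, $\langle w\rangle$ is the word over $(\omega\cup\{\#\})^n$ of length $\max_i|w_i|$ obtained by right-padding each $w_i$ with $\#$ and reading in parallel. An $\mathfrak M$-automaton with $n$ tapes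 is $(Q,n,E,I,T)$ with $Q$ finite, $I,T\subseteq Q$, and a finite set $E\subseteq Q\times\mathcal F_n\times Q$, $\mathcal F_n$ the first-order $\{+,P_\#\}$-formulas with $n$ free variables; $w$ is accepted if, writing $\langle w\rangle=u_0\cdots u_{m-1}$, there are states $q_0\in I,\dots,q_m\in T$ such that for each $i<m$ some $(q_i,\varphi,q_{i+1})\in E$ satisfies $\mathfrak M_\#\models\varphi(u_i)$. A relation $X\subseteq(\omega^* )^n$ is $(\omega;+)$-recognizable if it is the set of tuples accepted by some such automaton. *)

From mathcomp Require Import all_boot.
From Stdlib Require Lists.List.
Set Implicit Arguments. Unset Strict Implicit. Unset Printing Implicit Defensive.

(* An ordinal 0 < alpha < omega^omega, alpha = sum_{i=m}^{0} omega^i a_i with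
   a_m <> 0, is represented by the word c(alpha) = a_0 a_1 ... a_m : seq nat;
   0 is represented by the empty word. *)
Definition cnf (s : seq nat) : bool := last 1 s != 0.

(* If beta = 0 then alpha + beta = alpha; otherwise,
   with k the leading exponent of beta, the coefficients of alpha + beta are
   b_i for i < k, a_k + b_k at i = k, and a_i for i > k. *)
Definition oadd (a b : seq nat) : seq nat :=
  if b is [::] then a
  else let k := (size b).-1 in
       take k b ++ (nth 0 a k + nth 0 b k) :: drop k.+1 a.

Definition pad0 (m : nat) (s : seq nat) : seq nat := s ++ nseq (m - size s) 0.

(* Elements of omega ∪ {#} are represented by option nat, None = #. *)
Inductive formula : Type :=
  | FAdd of nat & nat & nat
  | FP of nat
  | FEq of nat & nat
  | FFalse
  | FNot of formula
  | FAnd of formula & formula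
  | FOr of formula & formula
  | FEx of nat & formula
  | FAll of nat & formula.

Definition upd (e : nat -> option nat) (v : nat) (x : option nat) :=
  fun w => if w == v then x else e w.

Fixpoint sat (e : nat -> option nat) (f : formula) : Prop :=
  match f with
  | FAdd x y z => exists a b c, e x = Some a /\ e y = Some b /\ e z = Some c
                               /\ a + b = c
  | FP x => e x = None
  | FEq x y => e x = e y
  | FFalse => False
  | FNot g => ~ sat e g
  | FAnd g h => sat e g /\ sat e h
  | FOr g h => sat e g \/ sat e h
  | FEx v g => exists x : option nat, sat (upd e v x) g
  | FAll v g => forall x : option nat, sat (upd e v x) g
  end.

Fixpoint fv_below (n : nat) (f : formula) : seq nat -> bool :=
  fun bound =>
  let ok v := (v < n) || (v \in bound) in
  match f with
  | FAdd x y z => [&& ok x, ok y & ok z]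
  | FP x => ok x
  | FEq x y => ok x && ok y
  | FFalse => true
  | FNot g => fv_below n g bound
  | FAnd g h | FOr g h => fv_below n g bound && fv_below n h bound
  | FEx v g | FAll v g => fv_below n g (v :: bound)
  end.

Definition formula_n (n : nat) (f : formula) : bool := fv_below n f [::].

(* the i-th letter of <w>, as a variable assignment (variable j < n gets the
   j-th component; other variables are irrelevant for formulas in F_n) *)
Definition letter (n : nat) (w : 'I_n -> seq nat) (i : nat) : nat -> option nat :=
  fun j => match @insub nat (fun k => k < n) 'I_n j with
           | Some k => let s := w k in
                       if i < size s then Some (nth 0 s i) else None
           | None => None
           end.

Definition conv_len (n : nat) (w : 'I_n -> seq nat) : nat :=
  \max_(j < n) size (w j).

Record automaton (n : nat) := Automaton {
  aQ : finType;
  aE : seq (aQ * formula * aQ);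
  aI : {set aQ};
  aT : {set aQ} }.

Definition wf_automaton (n : nat) (A : automaton n) : Prop :=
  forall q f q', Stdlib.Lists.List.In (q, f, q') (aE A) -> formula_n n f.

Definition accepts (n : nat) (A : automaton n) (w : 'I_n -> seq nat) : Prop :=
  exists r : nat -> aQ A,
    r 0 \in aI A /\ r (conv_len w) \in aT A /\
    forall i, i < conv_len w ->
      exists f, Stdlib.Lists.List.In (r i, f, r i.+1) (aE A) /\ sat (letter w i) f.

Definition recognizable (n : nat) (X : ('I_n -> seq nat) -> Prop) : Prop :=
  exists A : automaton n, wf_automaton A /\
    forall w, X w <-> accepts A w.

Definition add_rel (w : 'I_3 -> seq nat) : Prop :=
  exists a b c : seq nat,
    [/\ cnf a, cnf b, cnf c, oadd a b = c &
      let m := maxn (size a) (maxn (size b) (size c)) in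
      forall j : 'I_3, w j = pad0 m (nth [::] [:: a; b; c] j)].

(* Read the codes least significant digit first.  If beta <> 0 has leading
   exponent e, the Cantor normal form of alpha + beta has the digits of beta
   below e, a_e + b_e at e and the digits of alpha above e; since the digits of
   beta vanish above e, the digit of gamma is b_i for i < e and a_i + b_i for
   i >= e.  An automaton reading the three padded codes in parallel can thus
   guess e: in state [Low] it checks c_i = b_i, it leaves [Low] on a letter with
   b_e <> 0 and c_e = a_e + b_e, and from then on it checks b_i = 0 and
   c_i = a_i + b_i; it accepts after a last letter with c_i <> 0, which makes
   gamma a valid code.  Each of these letter conditions is first-order in
   (omega; +), e.g. v = 0 as v + v = v. *)

From HB Require Import structures.
From mathcomp Require Import all_boot zify.

Set Implicit Arguments.
Unset Strict Implicit.
Unset Printing Implicit Defensive.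

Fixpoint strip (s : seq nat) : seq nat :=
  if s is a :: s' then
    let t := strip s' in if (a == 0) && nilp t then [::] else a :: t
  else [::].

Lemma nth_strip s i : nth 0 (strip s) i = nth 0 s i.
Proof.
elim: s i => [|a s IH] i //=; case: ifP => [/andP[/eqP -> /nilP t0] | _].
- by case: i => [|i] //=; rewrite -IH t0 nth_nil.
- by case: i.
Qed.

Lemma size_strip s : size (strip s) <= size s.
Proof. by elim: s => [|a s IH] //=; case: ifP. Qed.

Lemma cnf_nth s : 0 < size s -> cnf s = (nth 0 s (size s).-1 != 0).
Proof. by case: s => // a s _; rewrite /cnf nth_last. Qed.

Lemma cnf_strip s : cnf (strip s).
Proof.
elim: s => [|a s IH] //=; case: ifP => // /negbT; rewrite negb_and.
by move: IH; rewrite /cnf; case: (strip s) => [|b t] //=; rewrite orbF.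
Qed.

Lemma cnf_size_leq s t : cnf s -> nth 0 s =1 nth 0 t -> size s <= size t.
Proof.
move=> cs st; rewrite leqNgt; apply/negP => lt_ts.
have s_gt0 : 0 < size s by apply: leq_ltn_trans lt_ts.
move: cs; rewrite cnf_nth // st nth_default ?eqxx //.
by rewrite -ltnS prednK.
Qed.

Lemma nth_pad0 m s i : nth 0 (pad0 m s) i = nth 0 s i.
Proof.
by rewrite /pad0 nth_cat; case: ltnP => // ?; rewrite nth_nseq if_same nth_default.
Qed.

Lemma size_pad0 m s : size s <= m -> size (pad0 m s) = m.
Proof. by move=> ?; rewrite /pad0 size_cat size_nseq subnKC. Qed.

Lemma pad0_id s : pad0 (size s) s = s.
Proof. by rewrite /pad0 subnn cats0. Qed.

Lemma pad0_strip s : pad0 (size s) (strip s) = s.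
Proof.
apply: (@eq_from_nth _ 0) => [|i _]; first by rewrite size_pad0 // size_strip.
by rewrite nth_pad0 nth_strip.
Qed.

Lemma strip_pad0 m s : cnf s -> strip (pad0 m s) = s.
Proof.
move=> cs; have E i : nth 0 (strip (pad0 m s)) i = nth 0 s i.
  by rewrite nth_strip nth_pad0.
apply: (@eq_from_nth _ 0) => [|i _]; last exact: E.
by apply/eqP; rewrite eqn_leq !cnf_size_leq ?cnf_strip // => i; rewrite E.
Qed.

Lemma size_strip_gt s i : nth 0 s i != 0 -> i < size (strip s).
Proof. by rewrite ltnNge; apply: contra => ?; rewrite -nth_strip nth_default. Qed.

Lemma size_strip_leq s n : (forall i, n <= i -> nth 0 s i = 0) -> size (strip s) <= n.
Proof.
move=> s0; apply: leq_trans (geq_minl n (size s)); rewrite -size_take_min.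
apply: cnf_size_leq (cnf_strip s) _ => i.
rewrite nth_strip; case: (ltnP i n) => [lt_in | le_ni]; first by rewrite nth_take.
by rewrite s0 // nth_default // size_take_min (leq_trans (geq_minl _ _) le_ni).
Qed.

Lemma size_oadd a b : size (oadd a b) = maxn (size a) (size b).
Proof.
case: b => [|v b] /=; first by rewrite maxn0.
rewrite size_cat size_take /= size_drop ltnSn; lia.
Qed.

Lemma nth_oadd a b i :
  nth 0 (oadd a b) i = if i < (size b).-1 then nth 0 b i else nth 0 a i + nth 0 b i.
Proof.
case: b => [|v b] /=; first by rewrite nth_nil addn0.
rewrite nth_cat size_take /= ltnSn; case: ltngtP => [lt_ib | lt_bi | ->].
- by rewrite nth_take.
- rewrite -[i - size b]prednK ?subn_gt0 //= nth_drop -subnS subnKC //.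
  by rewrite [nth 0 (v :: b) i]nth_default ?addn0.
- by rewrite subnn.
Qed.

(* [Done] is entered on the last letter of a nonempty input; [Empty] only
   serves to accept the empty input. *)
Inductive state := Low | High | Done | Empty.

Definition state_code (q : state) : bool * bool :=
  match q with
  | Low => (false, false) | High => (false, true)
  | Done => (true, false) | Empty => (true, true)
  end.

Definition code_state (c : bool * bool) : state :=
  match c with
  | (false, false) => Low | (false, true) => High
  | (true, false) => Done | (true, true) => Empty
  end.

Lemma state_codeK : cancel state_code code_state. Proof. by case. Qed.

HB.instance Definition _ := Finite.copy state (can_type state_codeK).

Definition fZero (x : nat) : formula := FAdd x x x.
Definition fSum : formula := FAdd 0 1 2.
(* The existential only forces the alpha-digit to be a number rather than #. *)
Definition fCopy : formula := FAnd (FEq 2 1) (FEx 3 (FAdd 0 1 3)).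

Definition add_edges : seq (state * formula * state) :=
  [:: (Low, fCopy, Low);
      (Low, FAnd fSum (FNot (fZero 1)), High);
      (Low, FAnd fSum (FNot (fZero 1)), Done);
      (High, FAnd fSum (fZero 1), High);
      (High, FAnd (FAnd fSum (fZero 1)) (FNot (fZero 2)), Done)].

Definition add_automaton : automaton 3 :=
  @Automaton 3 state add_edges [set Low; High; Empty] [set Done; Empty].

Lemma add_automaton_wf : wf_automaton add_automaton.
Proof. by move=> q f q' /= [[_ <- _]|[[_ <- _]|[[_ <- _]|[[_ <- _]|[[_ <- _]|[]]]]]]. Qed.

Definition add_step (q q' : state) (u v t : nat) : Prop :=
  match q, q' with
  | Low, Low => t = v
  | Low, (High | Done) => v <> 0 /\ t = u + v
  | High, High => v = 0 /\ t = u + v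
  | High, Done => [/\ v = 0, t = u + v & t <> 0]
  | _, _ => False
  end.

Definition column (e : nat -> option nat) (u v t : nat) : Prop :=
  [/\ e 0 = Some u, e 1 = Some v & e 2 = Some t].

Lemma sat_fZero e x : sat e (fZero x) <-> e x = Some 0.
Proof.
split=> [[a [b [c [ea [eb [ec abc]]]]]] | ex]; last by exists 0, 0, 0.
rewrite ea in eb ec *; case: eb => <- in abc; case: ec => <- in abc.
by congr Some; lia.
Qed.

Lemma sat_fSum e : sat e fSum <-> exists u v, column e u v (u + v).
Proof.
split=> [[u [v [t [eu [ev [et tE]]]]]] | [u [v [eu ev et]]]].
  by exists u, v; split; rewrite // tE.
by exists u, v, (u + v).
Qed.

Lemma sat_fCopy e : sat e fCopy <-> exists u v, column e u v v.
Proof.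
rewrite /= /upd /=; split=> [[e21 [_ [u [v [t [eu [ev _]]]]]]] | [u [v [eu ev et]]]].
  by exists u, v; split; rewrite // e21.
by split; [rewrite et ev | exists (Some (u + v)), u, v, (u + v)].
Qed.

Lemma add_edgesP e q q' :
  (exists f, List.In (q, f, q') add_edges /\ sat e f) <->
  exists u v t, column e u v t /\ add_step q q' u v t.
Proof.
have zero j w : e j = Some w -> sat e (fZero j) <-> w = 0.
  by move=> ej; rewrite sat_fZero ej; split=> [[]|->].
split=> [[f [/= edge]] | [u [v [t [col step]]]]].
  case: edge => [[<- <- <-]|[[<- <- <-]|[[<- <- <-]|[[<- <- <-]|[[<- <- <-]|[]]]]]] sat_f.
  - by case/sat_fCopy: sat_f => u [v col]; exists u, v, v.
  - case: sat_f => /sat_fSum[u [v col]] nz; exists u, v, (u + v).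
    by case: (col) => _ /zero ev _; do 2 split=> //; move/ev/nz.
  - case: sat_f => /sat_fSum[u [v col]] nz; exists u, v, (u + v).
    by case: (col) => _ /zero ev _; do 2 split=> //; move/ev/nz.
  - case: sat_f => /sat_fSum[u [v col]] z1; exists u, v, (u + v).
    by case: (col) => _ /zero ev _; do 2 split=> //; apply/ev.
  - case: sat_f => [[/sat_fSum[u [v col]] z1] nz]; exists u, v, (u + v).
    by case: (col) => _ /zero ev /zero et; do 2 split=> //; [apply/ev | move/et/nz].
case: (col) => _ ev et.
have sum : t = u + v -> sat e fSum.
  by move=> tE; apply/sat_fSum; exists u, v; rewrite tE in col.
case: q q' step => [] [] //= step.
- exists fCopy; split; first by left.
  by apply/sat_fCopy; exists u, v; rewrite step in col.
- case: step => v0 /sum sat_sum; exists (FAnd fSum (FNot (fZero 1))).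
  by split; [right; left | split=> // /(zero 1 v ev)].
- case: step => v0 /sum sat_sum; exists (FAnd fSum (FNot (fZero 1))).
  by split; [right; right; left | split=> // /(zero 1 v ev)].
- case: step => v0 /sum sat_sum; exists (FAnd fSum (fZero 1)).
  by split; [do 3 right; left | split=> //; apply/(zero 1 v ev)].
- case: step => v0 /sum sat_sum t0; exists (FAnd (FAnd fSum (fZero 1)) (FNot (fZero 2))).
  split; first by do 4 right; left.
  by split; [split=> //; apply/(zero 1 v ev) | move/(zero 2 t et)].
Qed.

Lemma letterE n (w : 'I_n -> seq nat) i (j : 'I_n) :
  letter w i j = if i < size (w j) then Some (nth 0 (w j) i) else None.
Proof.
rewrite /letter; case: insubP => [k _ kj | ]; last by rewrite ltn_ord.
by rewrite (val_inj kj).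
Qed.

Lemma conv_len_eq n (w : 'I_n.+1 -> seq nat) m :
  (forall j, size (w j) = m) -> conv_len w = m.
Proof.
move=> size_w; apply/eqP; rewrite eqn_leq -{2}(size_w ord0) leq_bigmax andbT.
by apply/bigmax_leqP => j _; rewrite size_w.
Qed.

Definition tapeA : 'I_3 := @Ordinal 3 0 isT.
Definition tapeB : 'I_3 := @Ordinal 3 1 isT.
Definition tapeC : 'I_3 := @Ordinal 3 2 isT.

Lemma forall_ord3 (P : 'I_3 -> Prop) : (forall j, P j) <-> [/\ P tapeA, P tapeB & P tapeC].
Proof.
by split=> [P_ | [PA PB PC] [[|[|[|j]]] lt_j3]] //; rewrite (bool_irrelevance lt_j3 isT).
Qed.

Lemma column_letterP (w : 'I_3 -> seq nat) i u v t :
  column (letter w i) u v t <->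
  [/\ i < size (w tapeA), i < size (w tapeB), i < size (w tapeC) &
      [/\ u = nth 0 (w tapeA) i, v = nth 0 (w tapeB) i & t = nth 0 (w tapeC) i]].
Proof.
rewrite /column (letterE w i tapeA) (letterE w i tapeB) (letterE w i tapeC).
do 3 case: ifP => _; split=> -[] //; try by move=> [->] [->] [->].
by move=> _ _ _ [-> -> ->].
Qed.

Lemma add_edges_letterP (w : 'I_3 -> seq nat) i q q' :
  (exists f, List.In (q, f, q') add_edges /\ sat (letter w i) f) <->
  [/\ i < size (w tapeA), i < size (w tapeB), i < size (w tapeC) &
      add_step q q' (nth 0 (w tapeA) i) (nth 0 (w tapeB) i) (nth 0 (w tapeC) i)].
Proof.
rewrite add_edgesP; split=> [[u [v [t [/column_letterP[? ? ? [-> -> ->]] //]]]] | [? ? ? step]].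
by do 3 eexists; split; [apply/column_letterP | exact: step].
Qed.

Definition add_run (x y z : seq nat) (r : nat -> state) : Prop :=
  [/\ r 0 \in aI add_automaton, r (size z) \in aT add_automaton &
      forall i, i < size z -> add_step (r i) (r i.+1) (nth 0 x i) (nth 0 y i) (nth 0 z i)].

Lemma accepts_add_automatonP (w : 'I_3 -> seq nat) :
  accepts add_automaton w <->
  [/\ size (w tapeA) = size (w tapeC), size (w tapeB) = size (w tapeC) &
      exists r, add_run (w tapeA) (w tapeB) (w tapeC) r].
Proof.
split=> [[r [r0 [rL step]]] | [eA eB [r [r0 rL step]]]].
  have {}step i : i < conv_len w -> _ := fun lt_iL => (add_edges_letterP w i _ _).1 (step i lt_iL).
  have size_w j : size (w j) = conv_len w.
    apply/eqP; rewrite eqn_leq leq_bigmax /=.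
    case: (posnP (conv_len w)) => [-> // | L_gt0].
    have [? ? ? _] := step (conv_len w).-1 ltac:(by rewrite ltn_predL).
    by move: j; apply/forall_ord3; split; rewrite -(prednK L_gt0).
  rewrite !size_w; split=> //; exists r; split; rewrite ?size_w //.
  by move=> i /step[].
have L_eq : conv_len w = size (w tapeC) by apply: conv_len_eq; apply/forall_ord3.
exists r; rewrite L_eq; do 2 split=> //.
by move=> i lt_iL; apply/add_edges_letterP; rewrite eA eB; split; last exact: step.
Qed.

Section AddRun.

Variables x y z : seq nat.
Hypotheses (size_x : size x = size z) (size_y : size y = size z).

Local Notation L := (size z).
Local Notation k := (size (strip y)).

(* [k.-1] is the leading exponent of beta; for beta = 0, i.e. [k = 0], the
   truncated [k.-1] is 0 and the formula correctly reads c_i = a_i + 0. *)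
Definition add_digits : Prop :=
  forall i, i < L -> nth 0 z i = if i < k.-1 then nth 0 y i else nth 0 x i + nth 0 y i.

Lemma oadd_strip_digitsP : cnf z -> oadd (strip x) (strip y) = z <-> add_digits.
Proof.
move=> cz; split=> [E i _ | digits]; first by rewrite -E nth_oadd !nth_strip.
have size_le : size (oadd (strip x) (strip y)) <= L.
  by rewrite size_oadd geq_max -{1}size_x -size_y !size_strip.
have nthE i : nth 0 z i = nth 0 (oadd (strip x) (strip y)) i.
  case: (ltnP i L) => [/digits -> | le_Li]; first by rewrite nth_oadd !nth_strip.
  by rewrite !nth_default // (leq_trans size_le).
apply: (@eq_from_nth _ 0) => [|i _]; last by rewrite nthE.
by apply/eqP; rewrite eqn_leq size_le cnf_size_leq.
Qed.

Section Sound.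

Variable r : nat -> state.
Hypothesis run : add_run x y z r.

Lemma add_run_live i : i < L -> r i = Low \/ r i = High.
Proof. by case: run => _ _ /(_ i) step /step; case: (r i) => []; auto. Qed.

Lemma add_run_high i : r i <> Low -> i <= L -> k <= i.
Proof.
case: run => _ _ step ri le_iL; apply: size_strip_leq => j le_ij.
case: (ltnP j L) => [lt_jL | ?]; last by rewrite nth_default ?size_y.
have not_low d : i + d <= L -> r (i + d) <> Low.
  elim: d => [|d IH]; rewrite ?addn0 // addnS => lt_idL.
  have := step _ lt_idL; case: (add_run_live lt_idL) (IH (ltnW lt_idL)) => -> //.
  by case: (r (i + d).+1).
have := not_low (j - i); rewrite subnKC // => /(_ (ltnW lt_jL)).
by case: (add_run_live lt_jL) (step j lt_jL) => ->; case: (r j.+1) => // -[].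
Qed.

Lemma add_run_low i : r i = Low -> i <= L -> i < k.
Proof.
case: run => _ rL step ri /subnKC; move: (L - i) => d.
elim: d i ri => [|d IH] i ri; first by rewrite addn0 => iL; move: rL; rewrite -iL ri !inE.
rewrite addnS => iL; have := step i; rewrite -iL leq_addr ri => /(_ isT).
case: (r i.+1) (IH i.+1) => [/(_ erefl) IH1 _ | _ [y_i _] | _ [y_i _] | _ []].
- by rewrite (ltnW (IH1 _)) // addSnnS.
- by apply: size_strip_gt; apply/eqP.
- by apply: size_strip_gt; apply/eqP.
Qed.

Lemma add_run_digits : add_digits.
Proof.
case: run => _ _ step i lt_iL; have := step i lt_iL.
case: (r i.+1 =P Low) => [low | not_low].
  have lt_ik := add_run_low low lt_iL.
  have -> : i < k.-1 by lia.
  by rewrite low; case: (r i).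
have le_ki := add_run_high not_low lt_iL.
have -> : (i < k.-1) = false by lia.
by move: not_low; case: (r i); case: (r i.+1) => //= _; case=> // _ ->.
Qed.

Lemma add_run_cnf : cnf z.
Proof.
case: run => _ rL step; case: (posnP L) => [/eqP | L_gt0]; first by rewrite size_eq0 => /eqP ->.
rewrite cnf_nth //; have := step L.-1; rewrite ltn_predL prednK // => /(_ L_gt0).
move: rL; rewrite !inE; case: (r L) => //= _; case: (r L.-1) => //=.
- by case=> ? ->; lia.
- by case=> _ _ /eqP.
Qed.

End Sound.

Definition canonical_run (i : nat) : state :=
  if i < k then Low else if i < L then High else if L == 0 then Empty else Done.

Lemma add_run_canonical : cnf z -> add_digits -> add_run x y z canonical_run.
Proof.
move=> cz digits; have le_kL : k <= L by rewrite -size_y size_strip.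
rewrite /canonical_run; split.
- by rewrite !inE; case: ifP => // _; case: (posnP L).
- by rewrite ltnNge le_kL ltnn !inE /=; case: (L == 0).
move=> i lt_iL; rewrite lt_iL; have := digits i lt_iL.
have z_last : i.+1 = L -> nth 0 z i != 0.
  by move=> iL; move: cz; rewrite cnf_nth -iL.
have L_neq0 : (L == 0) = false by lia.
case: (ltngtP i.+1 k) => [lt_ik | lt_ki | ik].
- by have -> : i < k.-1 by lia.
- have -> : (i < k.-1) = false by lia.
  have y_i : nth 0 y i = 0 by rewrite -nth_strip nth_default.
  move=> z_i; case: ltnP => [_ | le_Li]; first by split.
  by rewrite L_neq0; split=> //; apply/eqP/z_last; lia.
- have y_i : nth 0 y i != 0.
    by move: (cnf_strip y); rewrite cnf_nth -?ik // nth_strip.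
  have -> : (i < k.-1) = false by lia.
  rewrite L_neq0 => z_i.
  by case: ltnP => _; split=> //; apply/eqP.
Qed.

Lemma add_runP : (exists r, add_run x y z r) <-> cnf z /\ oadd (strip x) (strip y) = z.
Proof.
split=> [[r run] | [cz /(oadd_strip_digitsP cz) digits]].
  have cz := add_run_cnf run.
  by split=> //; apply/(oadd_strip_digitsP cz)/(add_run_digits run).
by exists canonical_run; apply: add_run_canonical.
Qed.

End AddRun.

Lemma add_relP (w : 'I_3 -> seq nat) :
  add_rel w <->
  [/\ size (w tapeA) = size (w tapeC), size (w tapeB) = size (w tapeC),
      cnf (w tapeC) & oadd (strip (w tapeA)) (strip (w tapeB)) = w tapeC].
Proof.
split=> [[a [b [c [ca cb cc E /forall_ord3[/= wA wB wC]]]]] | [eA eB cC E]].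
  have size_c : size c = maxn (size a) (size b) by rewrite -E size_oadd.
  have m_c : maxn (size a) (maxn (size b) (size c)) = size c by lia.
  rewrite m_c in wA wB wC; rewrite wA wB wC pad0_id !strip_pad0 // !size_pad0 //; lia.
exists (strip (w tapeA)), (strip (w tapeB)), (w tapeC).
split; rewrite ?cnf_strip //.
have -> : maxn (size (strip (w tapeA))) (maxn (size (strip (w tapeB))) (size (w tapeC))) =
          size (w tapeC).
  by have := size_strip (w tapeA); have := size_strip (w tapeB); lia.
apply/forall_ord3; split=> /=; first by rewrite -eA pad0_strip.
  by rewrite -eB pad0_strip.
by rewrite pad0_id.
Qed.

Theorem proposition5p6 : recognizable add_rel.
Proof.
exists add_automaton; split=> [|w]; first exact: add_automaton_wf.
split=> [/add_relP[eA eB cC E] | /accepts_add_automatonP[eA eB run]].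
  by apply/accepts_add_automatonP; split=> //; apply/add_runP.
by apply/add_relP; have [] := (add_runP eA eB).1 run.
Qed.
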